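(* Let $m\ge2$, $n=3^{2m}-1$, and for $0\le j\le 2m-1$ let $S_{1j}=\{-3^i(3^j(3^m+1)+1)\bmod n : 0\le i\le 2m-1\}\subseteq\mathbb Z/n\mathbb Z$, and $S_1=\bigcup_{j=0}^{2m-1}S_{1j}$. Then: (1) $|S_{1j}|=2m$ for every $0\le j\le 2m-1$; (2) for $0\le j_1\ne j_2\le 2m-1$, either $S_{1j_1}\cap S_{1j_2}=\varnothing$ or $S_{1j_1}=S_{1j_2}$, and the latter holds if and only if $j_1\equiv j_2+m\pmod{2m}$; (3) $|S_1|=2m^2$. *)

From mathcomp Require Import all_boot all_algebra.
Set Implicit Arguments. Unset Strict Implicit. Unset Printing Implicit Defensive.
Import GRing.Theory.
Local Open Scope ring_scope.

(* n = 3^(2m) - 1 ; Z/nZ is 'Z_n (fine since m >= 2 gives n >= 2). *)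
Definition nn (m : nat) : nat := (3 ^ (2 * m) - 1)%N.

Definition S1j (m j : nat) : {set 'Z_(nn m)} :=
  [set (- ((3 ^ i * (3 ^ j * (3 ^ m + 1) + 1))%N%:R : 'Z_(nn m))) | i : 'I_(2 * m)].

Definition S1 (m : nat) : {set 'Z_(nn m)} := \bigcup_(j < 2 * m) S1j m j.

From mathcomp Require Import all_boot all_algebra.
From mathcomp Require Import zify.
Import GRing.Theory.

Set Implicit Arguments.
Unset Strict Implicit.
Unset Printing Implicit Defensive.

(* Write n = 3^(2m) - 1 = (3^m - 1)(3^m + 1) and, for any base b,
     v(i, j) = b^i (b^j (b^m + 1) + 1),
   so that S_1j = { -v(i, j) mod n : i < 2m } for b = 3.  The whole lemma
   rests on one congruence criterion (coset_val_eq): for i, i' < 2m,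
     v(i, j) = v(i', j')  (mod b^(2m) - 1)   iff   i = i'  and  j = j' (mod m).
   Modulo b^m + 1 we have v(i, j) = b^i, and b has order exactly 2m there, so
   i is determined; once i = i', cancelling b^i and the factor b^m + 1 leaves
   b^j = b^j' (mod b^m - 1), and b has order exactly m modulo b^m - 1.
   The file first proves these facts on powers of b, then the criterion, then
   transfers it to the elements of Z/nZ.  The three claims follow: the map
   i |-> -v(i, j) is injective (|S_1j| = 2m); two orbits S_1j, S_1j' meet iff
   j = j' (mod m), in which case they coincide, and for distinct j, j' < 2m this
   is the condition j = j' + m (mod 2m); finally S_1 is the injective image of
   the pairs (i, j) with i < 2m and j < m, so |S_1| = 2m * m. *)

Lemma eqn_modMl_coprime (k d x y : nat) :
  coprime k d -> (k * x == k * y %[mod d]) = (x == y %[mod d]).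
Proof.
move=> cop; wlog le_xy : x y / x <= y => [sym|].
  by case/orP: (leq_total x y) => /sym //; rewrite eq_sym => ->; rewrite eq_sym.
rewrite eq_sym [RHS]eq_sym !eqn_mod_dvd ?leq_mul2l ?le_xy ?orbT //.
by rewrite -mulnBr Gauss_dvdr // coprime_sym.
Qed.

Lemma modn_lt_double (d t : nat) : t < 2 * d -> t %% d = if t < d then t else t - d.
Proof.
move=> lt_t2d; case: ltnP => [lt_td|le_dt]; first exact: modn_small.
by rewrite -{1}(subnK le_dt) modnDr modn_small //; lia.
Qed.

Lemma eqn_mod_half_shift (m x y : nat) : x < 2 * m -> y < 2 * m -> x != y ->
  (x == y %[mod m]) = (x == y + m %[mod 2 * m]).
Proof.
move=> hx hy neq_xy.
rewrite (modn_small hx) !modn_lt_double //; last lia.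
rewrite mul2n -addnn ltn_add2r.
have [lt_ym|le_my] := ltnP y m; have [lt_xm|le_mx] := ltnP x m.
all: apply/eqP/eqP; lia.
Qed.

Section PowerResidues.
Variable b : nat.
Hypothesis b_gt1 : 1 < b.

Let b_gt0 : 0 < b. Proof. exact: ltnW. Qed.
Let pow_gt0 (k : nat) : 0 < b ^ k. Proof. by rewrite expn_gt0 b_gt0. Qed.

Lemma expn_double_pred (m : nat) : b ^ (2 * m) - 1 = (b ^ m - 1) * (b ^ m + 1).
Proof. by rewrite mulnC expnM -subn_sqr exp1n. Qed.

Lemma coprime_expn_pred (k e : nat) : 0 < e -> coprime (b ^ k) (b ^ e - 1).
Proof.
move=> e_gt0; apply: coprimeXl; rewrite coprime_sym -(coprime_pexpr _ _ e_gt0).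
by rewrite subn1 coprimePn.
Qed.

(* Since b^m = 1 modulo b^m - 1, exponents only matter modulo m. *)
Lemma expn_mod_pred_period (m k : nat) : b ^ k = b ^ (k %% m) %[mod b ^ m - 1].
Proof.
have bm1 : b ^ m = 1 %[mod b ^ m - 1].
  by rewrite -{1}(subnK (pow_gt0 m)) modnDl.
rewrite {1}(divn_eq k m) expnD [k %/ m * m]mulnC expnM -modnMml -modnXm bm1 modnXm.
by rewrite exp1n modnMml mul1n.
Qed.

(* The powers b^r, r < m, are pairwise incongruent modulo b^m - 1: the
   nonzero ones are too small to be reduced. *)
Lemma expn_mod_pred_inj (m r s : nat) : r < m -> s < m ->
  b ^ r = b ^ s %[mod b ^ m - 1] -> r = s.
Proof.
wlog le_rs : r s / r <= s => [sym hr hs e|hr hs].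
  by case/orP: (leq_total r s) => /sym; [apply | move=> h; apply/esym/h].
case: ltngtP le_rs => // lt_rs _.
have lt_pow : b ^ r < b ^ s by rewrite ltn_exp2l.
have le_pow : b * b ^ s <= b ^ m by rewrite -expnS leq_exp2l.
have := pow_gt0 r.
by rewrite !modn_small; nia.
Qed.

Lemma expn_eq_mod_pred (m x y : nat) : 0 < m ->
  (b ^ x == b ^ y %[mod b ^ m - 1]) = (x == y %[mod m]).
Proof.
move=> m_gt0; rewrite (expn_mod_pred_period m x) (expn_mod_pred_period m y).
apply/eqP/eqP => [|-> //].
exact: expn_mod_pred_inj (ltn_pmod _ m_gt0) (ltn_pmod _ m_gt0).
Qed.

(* The powers b^x, x < 2m, are pairwise incongruent modulo b^m + 1: after
   cancelling, b^d = 1 with 0 < d < 2m is impossible, for if d >= m then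
   b^d = -b^(d-m) and 0 < 1 + b^(d-m) < b^m + 1. *)
Lemma expn_mod_succ_inj (m x y : nat) : x < 2 * m -> y < 2 * m ->
  b ^ x = b ^ y %[mod b ^ m + 1] -> x = y.
Proof.
wlog le_xy : x y / x <= y => [sym hx hy e|hx hy].
  by case/orP: (leq_total x y) => /sym; [apply | move=> h; apply/esym/h].
have m_gt0 : 0 < m by lia.
set d := y - x; have -> : y = x + d by lia.
rewrite -[b ^ x]muln1 expnD => /eqP; rewrite eqn_modMl_coprime; last first.
  have cop : coprime (b ^ x) (b ^ (2 * m) - 1) by apply: coprime_expn_pred; lia.
  by apply: coprime_dvdr cop; rewrite expn_double_pred dvdn_mull.
move/eqP => pow_d; suff d0 : d = 0 by lia.
case: (ltnP d m) => [lt_dm|le_md].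
  have lt_pow : b ^ d < b ^ m + 1 by rewrite addn1 ltnS leq_exp2l // ltnW.
  move: pow_d; rewrite !modn_small //; last by have := pow_gt0 m; lia.
  by move/esym/eqP; rewrite -[1](expn0 b) eqn_exp2l // => /eqP.
have : 1 + b ^ (d - m) = 0 %[mod b ^ m + 1].
  rewrite -modnDml pow_d modnDml -{1}(subnK le_md) expnD.
  by rewrite -mulnSr -addn1 mod0n modnMl.
have lt_pow : b ^ (d - m) < b ^ m by rewrite ltn_exp2l //; lia.
by rewrite mod0n modn_small; lia.
Qed.

Definition coset_val (m i j : nat) : nat := b ^ i * (b ^ j * (b ^ m + 1) + 1).

Lemma coset_val_mod_succ (m i j : nat) : coset_val m i j = b ^ i %[mod b ^ m + 1].
Proof. by rewrite /coset_val mulnDr muln1 mulnA modnMDl. Qed.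

Lemma coset_val_eq_same_exp (m i j j' : nat) : 0 < m ->
  (coset_val m i j == coset_val m i j' %[mod b ^ (2 * m) - 1]) = (j == j' %[mod m]).
Proof.
move=> m_gt0; rewrite eqn_modMl_coprime ?coprime_expn_pred ?muln_gt0 // eqn_modDr.
by rewrite expn_double_pred -!muln_modl eqn_pmul2r ?addn1 // expn_eq_mod_pred.
Qed.

Lemma coset_val_eq (m i i' j j' : nat) : i < 2 * m -> i' < 2 * m ->
  (coset_val m i j == coset_val m i' j' %[mod b ^ (2 * m) - 1])
    = (i == i') && (j == j' %[mod m]).
Proof.
move=> hi hi'; have m_gt0 : 0 < m by lia.
apply/idP/andP => [e|[/eqP <-]]; last by rewrite coset_val_eq_same_exp.
suff ei : i = i' by move: e; rewrite ei eqxx coset_val_eq_same_exp.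
have dvd_q : b ^ m + 1 %| b ^ (2 * m) - 1 by rewrite expn_double_pred dvdn_mull.
apply: (expn_mod_succ_inj hi hi').
move/eqP: e => /(congr1 (modn ^~ (b ^ m + 1))).
by rewrite /= !modn_dvdm // !coset_val_mod_succ.
Qed.

End PowerResidues.

Definition S1elt (m i j : nat) : 'Z_(nn m) := (- (coset_val 3 m i j)%:R)%R.

Lemma S1jE (m j : nat) : S1j m j = [set S1elt m i j | i : 'I_(2 * m)].
Proof. by []. Qed.

(* n > 1, so Z/nZ is the genuine ring of residues modulo n. *)
Lemma nn_gt1 (m : nat) : 0 < m -> 1 < nn m.
Proof.
move=> m_gt0; rewrite /nn.
have : 3 ^ 2 <= 3 ^ (2 * m) by rewrite leq_exp2l //; lia.
lia.
Qed.

Lemma S1elt_eq (m i i' j j' : nat) : i < 2 * m -> i' < 2 * m ->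
  (S1elt m i j == S1elt m i' j') = (i == i') && (j == j' %[mod m]).
Proof.
move=> hi hi'; have n_gt1 : 1 < nn m by apply: nn_gt1; lia.
by rewrite (inj_eq oppr_inj) -val_eqE /= !val_Zp_nat // coset_val_eq.
Qed.

Lemma S1j_shift (m j j' : nat) : j = j' %[mod m] -> S1j m j = S1j m j'.
Proof.
move=> e; rewrite !S1jE; apply: eq_imset => i /=.
by apply/eqP; rewrite S1elt_eq ?ltn_ord // e !eqxx.
Qed.

Lemma S1j_meet (m j j' : nat) (x : 'Z_(nn m)) :
  x \in S1j m j -> x \in S1j m j' -> j = j' %[mod m].
Proof.
rewrite !S1jE => /imsetP [i _ ->] /imsetP [i' _ /eqP].
by rewrite S1elt_eq // => /andP [_ /eqP].
Qed.

Lemma S1j_eqE (m j j' : nat) : 0 < m -> (S1j m j == S1j m j') = (j == j' %[mod m]).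
Proof.
move=> m_gt0; apply/eqP/eqP => [eqS|]; last exact: S1j_shift.
have lt0 : 0 < 2 * m by rewrite muln_gt0.
have x_j : S1elt m 0 j \in S1j m j by apply/imsetP; exists (Ordinal lt0) => //.
have x_j' : S1elt m 0 j \in S1j m j' by rewrite -eqS.
exact: S1j_meet x_j x_j'.
Qed.

Lemma S1j_disjoint_or_eq (m j j' : nat) :
  S1j m j :&: S1j m j' = set0 \/ S1j m j = S1j m j'.
Proof.
have [->|[x]] := set_0Vmem (S1j m j :&: S1j m j'); first by left.
by rewrite inE => /andP [x_j x_j']; right; exact/S1j_shift/(S1j_meet x_j x_j').
Qed.

Lemma card_S1j (m j : nat) : #|S1j m j| = 2 * m.
Proof.
rewrite S1jE card_imset ?card_ord // => i i' /eqP.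
by rewrite S1elt_eq // => /andP [/eqP/val_inj].
Qed.

(* Indices j >= m repeat the orbit of j - m, so S_1 is the image of the pairs
   (i, j) with i < 2m and j < m. *)
Lemma S1_eq_imset (m : nat) : S1 m = [set S1elt m p.1 p.2 | p : 'I_(2 * m) * 'I_m].
Proof.
apply/setP => x; apply/bigcupP/imsetP => [[j _]|[[i j] _ ->]].
  rewrite S1jE => /imsetP [i _ ->].
  have [lt_jm|le_mj] := ltnP j m; first by exists (i, Ordinal lt_jm).
  have lt_jm : j - m < m by have := ltn_ord j; lia.
  exists (i, Ordinal lt_jm) => //=; apply/eqP.
  by rewrite S1elt_eq ?ltn_ord // -{1}(subnK le_mj) modnDr !eqxx.
have lt_j2m : j < 2 * m by have := ltn_ord j; lia.
by exists (Ordinal lt_j2m) => //; rewrite S1jE; apply/imsetP; exists i.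
Qed.

(* That parametrisation is injective, so |S_1| = 2m * m. *)
Lemma card_S1 (m : nat) : #|S1 m| = 2 * m ^ 2.
Proof.
rewrite S1_eq_imset card_imset ?card_prod ?card_ord -?mulnA ?mulnn //.
move=> [i j] [i' j'] /eqP; rewrite S1elt_eq ?ltn_ord //= => /andP [/eqP/val_inj-> e].
by congr pair; apply: val_inj; move: e; rewrite !modn_small // => /eqP.
Qed.

Theorem lemma3p17 (m : nat) (hm : (2 <= m)%N) :
  (forall j : nat, (j < 2 * m)%N -> #|S1j m j| = (2 * m)%N) /\
  (forall j1 j2 : nat, (j1 < 2 * m)%N -> (j2 < 2 * m)%N -> j1 <> j2 ->
     (S1j m j1 :&: S1j m j2 = set0 \/ S1j m j1 = S1j m j2) /\
     (S1j m j1 = S1j m j2 <-> j1 = j2 + m %[mod 2 * m])) /\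
  #|S1 m| = (2 * m ^ 2)%N.
Proof.
have m_gt0 : 0 < m by lia.
split; first by move=> j _; exact: card_S1j.
split; last exact: card_S1.
move=> j1 j2 hj1 hj2 /eqP neq; split; first exact: S1j_disjoint_or_eq.
rewrite (rwP eqP) S1j_eqE // eqn_mod_half_shift //.
by split=> /eqP.
Qed.
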